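(* Let $\Delta\subset[0,d]\times[0,d]$ be a minimal lattice polygon with $\operatorname{lw}(\Delta)=d\ge1$, and let $P$ be a vertex of $\Delta$. Then there exists $v\in\{(0,1),(1,0),(1,1),(1,-1)\}$ with $\operatorname{lw}_v(\Delta_P)<d$.
   Context: A lattice polygon is the convex hull of a finite non-empty set of points of $\mathbb{Z}^2$. For a lattice polygon $\Delta$ and a non-zero primitive $v\in\mathbb{Z}^2$, $\operatorname{lw}_v(\Delta)=\max_{Q\in\Delta}\langle Q,v\rangle-\min_{Q\in\Delta}\langle Q,v\rangle$, and $\operatorname{lw}(\Delta)=\min_v\operatorname{lw}_v(\Delta)$ over all non-zero primitive $v\in\mathbb{Z}^2$. A lattice polygon $\Delta$ is minimal if $\operatorname{lw}(\Delta')<\operatorname{lw}(\Delta)$ for every lattice polygon $\Delta'\subsetneq\Delta$. For a vertex $P$ of $\Delta$, $\Delta_P:=\operatorname{conv}((\Delta\cap\mathbb{Z}^2)\setminus\{P\})$. *)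

From HB Require Import structures.
From mathcomp Require Import all_boot all_order all_algebra.
Set Implicit Arguments. Unset Strict Implicit. Unset Printing Implicit Defensive.
Import Order.TTheory GRing.Theory Num.Theory.
Local Open Scope ring_scope.

Definition lpt := (int * int)%type.
Definition ptQ (z : lpt) : rat * rat := (z.1%:~R, z.2%:~R).

Definition inPoly (S : seq lpt) (x : rat * rat) : Prop :=
  exists w : seq rat,
    [/\ size w = size S, all (fun a => 0 <= a) w, \sum_(a <- w) a = 1,
        x.1 = \sum_(i < size S) w`_i * ((nth (0,0) S i).1)%:~R
      & x.2 = \sum_(i < size S) w`_i * ((nth (0,0) S i).2)%:~R].

Definition is_vertex (S : seq lpt) (P : lpt) : Prop :=
  inPoly S (ptQ P) /\
  forall x y : rat * rat, inPoly S x -> inPoly S y ->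
    ptQ P = ((x.1 + y.1) / 2, (x.2 + y.2) / 2) -> x = y.

Definition dotz (z v : lpt) : int := z.1 * v.1 + z.2 * v.2.

(* lw_v(conv S) = max_{s in S} <s,v> - min_{s in S} <s,v>
   (the extrema of a linear form over conv S are attained on S) *)
Definition lwv (S : seq lpt) (v : lpt) : int :=
  match S with
  | [::] => 0
  | s :: S' =>
      foldr (fun t m => Num.max (dotz t v) m) (dotz s v) S' -
      foldr (fun t m => Num.min (dotz t v) m) (dotz s v) S'
  end.

Definition primitive (v : lpt) : bool := gcdz v.1 v.2 == 1.

Definition is_lw (S : seq lpt) (d : int) : Prop :=
  (exists v, primitive v /\ lwv S v = d) /\
  (forall v, primitive v -> d <= lwv S v).

Definition minimal (S : seq lpt) : Prop :=
  forall S' : seq lpt, S' != [::] ->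
    (forall x, inPoly S' x -> inPoly S x) ->
    (exists x, inPoly S x /\ ~ inPoly S' x) ->
    forall d d', is_lw S d -> is_lw S' d' -> d' < d.

(* If the four widths of Delta_P in the directions (0,1), (1,0), (1,1),
   (1,-1) were all at least d, then, Delta_P lying in the box [0,d]^2, its
   widths in the coordinate directions would be exactly d and every other
   primitive direction (a,b) has |a| > |b| or |b| > |a|, which forces
   lw_(a,b)(Delta_P) >= d as well.  Hence lw(Delta_P) >= d.  But P is a vertex,
   so it is not in Delta_P, and minimality of Delta gives lw(Delta_P) < d. *)
From HB Require Import structures.
From mathcomp Require Import all_boot all_order all_algebra.
Import Order.TTheory GRing.Theory Num.Theory.
From mathcomp Require Import zify ring lra.
From Stdlib Require Import Classical Wf_nat.
Set Implicit Arguments. Unset Strict Implicit. Unset Printing Implicit Defensive.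
Local Open Scope ring_scope.

Section FoldExtrema.

Variables (T : eqType) (disp : Order.disp_t) (R : orderType disp) (f : T -> R).

Lemma foldr_max_ge s S t : t \in s :: S ->
  (f t <= foldr (fun u m => Order.max (f u) m) (f s) S)%O.
Proof.
elim: S t => [|x S IH] t /=; first by rewrite inE => /eqP ->.
rewrite !inE le_max => /or3P[/eqP ->|/eqP ->|tS].
- by rewrite (IH s) ?orbT // inE eqxx.
- by rewrite lexx.
- by rewrite (IH t) ?orbT // inE tS orbT.
Qed.

Lemma foldr_min_le s S t : t \in s :: S ->
  (foldr (fun u m => Order.min (f u) m) (f s) S <= f t)%O.
Proof.
elim: S t => [|x S IH] t /=; first by rewrite inE => /eqP ->.
rewrite !inE ge_min => /or3P[/eqP ->|/eqP ->|tS].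
- by rewrite (IH s) ?orbT // inE eqxx.
- by rewrite lexx.
- by rewrite (IH t) ?orbT // inE tS orbT.
Qed.

Lemma foldr_max_mem s S : exists2 t, t \in s :: S &
  foldr (fun u m => Order.max (f u) m) (f s) S = f t.
Proof.
elim: S => [|x S [t tS IH]] /=; first by exists s; rewrite ?inE.
rewrite IH maxEle; case: ifP => _; last by exists x; rewrite // !inE eqxx orbT.
by exists t => //; move: tS; rewrite !inE => /orP[->|->]; rewrite ?orbT.
Qed.

Lemma foldr_min_mem s S : exists2 t, t \in s :: S &
  foldr (fun u m => Order.min (f u) m) (f s) S = f t.
Proof.
elim: S => [|x S [t tS IH]] /=; first by exists s; rewrite ?inE.
rewrite IH minEle; case: ifP => _; first by exists x; rewrite // !inE eqxx orbT.
by exists t => //; move: tS; rewrite !inE => /orP[->|->]; rewrite ?orbT.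
Qed.

End FoldExtrema.

Section Widths.

Variable T : seq lpt.

Lemma lwv_ge t t' v : t \in T -> t' \in T -> dotz t v - dotz t' v <= lwv T v.
Proof.
case: T => [//|s S] tT t'T /=.
apply: lerB; first exact: (foldr_max_ge (dotz^~ v) tT).
exact: (foldr_min_le (dotz^~ v) t'T).
Qed.

Lemma lwv_ge_dist t t' v : t \in T -> t' \in T ->
  `|dotz t v - dotz t' v| <= lwv T v.
Proof.
move=> tT t'T; have := lwv_ge v tT t'T; have := lwv_ge v t'T tT; lia.
Qed.

Lemma lwv_mem v : T != [::] -> exists t t',
  [/\ t \in T, t' \in T & lwv T v = dotz t v - dotz t' v].
Proof.
case: T => [//|s S] _ /=.
have [t tT ->] := foldr_max_mem (dotz^~ v) s S.
have [t' t'T ->] := foldr_min_mem (dotz^~ v) s S.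
by exists t, t'.
Qed.

Lemma lwv_ge0 v : 0 <= lwv T v.
Proof.
case E: T => [//|s S]; rewrite -E.
have sT : s \in T by rewrite E inE eqxx.
exact: le_trans (normr_ge0 _) (lwv_ge_dist v sT sT).
Qed.

Lemma lwvN a b : lwv T (- a, - b) = lwv T (a, b).
Proof.
have le_lwvN x y : lwv T (x, y) <= lwv T (- x, - y).
  have [->|T0] := eqVneq T [::]; first by [].
  have [t [t' [tT t'T ->]]] := lwv_mem (x, y) T0.
  by apply: le_trans (lwv_ge (- x, - y) t'T tT); rewrite /dotz /=; lia.
apply/eqP; rewrite eq_le le_lwvN andbT.
by have := le_lwvN (- a) (- b); rewrite !opprK.
Qed.

Lemma is_lw_exists : exists n : nat, is_lw T n.
Proof.
pose W n := exists v, primitive v /\ lwv T v = n%:Z.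
have W10 : W (absz (lwv T (1, 0))) by exists (1, 0); rewrite gez0_abs ?lwv_ge0.
have [n [[Wn n_min] _]] := dec_inh_nat_subset_has_unique_least_element W
  (fun n => classic (W n)) (ex_intro _ _ W10).
exists n; split=> // v pv; rewrite -(gez0_abs (lwv_ge0 v)) lez_nat.
by apply/ssrnat.leP/n_min; exists v; rewrite gez0_abs ?lwv_ge0.
Qed.

End Widths.

Lemma dominant_coef_ge (a b w e : int) :
  `|b| < `|a| -> `|e| <= w -> w <= `|a * w + b * e|.
Proof. move=> *; nia. Qed.

Lemma lwv_box_primitive_ge (T : seq lpt) (d : int) :
  (forall z, z \in T -> (0 <= z.1 <= d) && (0 <= z.2 <= d)) ->
  d <= lwv T (1, 0) -> d <= lwv T (0, 1) ->
  d <= lwv T (1, 1) -> d <= lwv T (1, -1) ->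
  forall v, primitive v -> d <= lwv T v.
Proof.
move=> box h10 h01 h11 h1N [a b] /eqP /= prim.
have [T0|T0] := eqVneq T [::]; first by rewrite T0 in h10 *.
have [[b1 b2] [[a1 a2] [bT aT lw10]]] := lwv_mem (1, 0) T0.
have [[d1 d2] [[c1 c2] [dT cT lw01]]] := lwv_mem (0, 1) T0.
move: (box _ aT) (box _ bT) (box _ cT) (box _ dT) => /= ha hb hc hd.
rewrite lw10 /dotz /= in h10; rewrite lw01 /dotz /= in h01.
case: (ltgtP `|b| `|a|) => hab.
- apply: le_trans (lwv_ge_dist (a, b) bT aT).
  have := dominant_coef_ge (w := b1 - a1) (e := b2 - a2) hab.
  rewrite /dotz /=; lia.
- apply: le_trans (lwv_ge_dist (a, b) dT cT).
  have := dominant_coef_ge (w := d2 - c2) (e := d1 - c1) hab.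
  rewrite /dotz /=; lia.
- move: prim; have [->|->] : b = a \/ b = - a by lia.
  all: rewrite ?gcdzN gcdzz => prim; have [->|->] : a = 1 \/ a = -1 by lia.
  all: rewrite ?opprK //; by rewrite -lwvN !opprK.
Qed.

Definition bary n (w : 'I_n -> rat) (y : 'I_n -> rat * rat) : rat * rat :=
  (\sum_j w j * (y j).1, \sum_j w j * (y j).2).

Definition cvx (l : rat) (p q : rat * rat) : rat * rat :=
  (l * p.1 + (1 - l) * q.1, l * p.2 + (1 - l) * q.2).

Lemma inPolyP S x : inPoly S x <-> exists2 w : 'I_(size S) -> rat,
  (forall j, 0 <= w j) /\ \sum_j w j = 1 &
  x = bary w (fun j => ptQ (nth (0, 0) S j)).
Proof.
split=> [[w [sz w0 w1 e1 e2]]|[w [w0 w1] ->]].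
- exists (fun j => w`_j); last by case: x e1 e2 => x1 x2 /= -> ->.
  split=> [j|]; last by rewrite -w1 (big_nth 0) sz big_mkord.
  case: (ltnP j (size w)) => [jw|?]; last by rewrite nth_default.
  by apply: (allP w0); rewrite mem_nth.
- have nthW (j : 'I_(size S)) : (map w (enum 'I_(size S)))`_j = w j.
  by rewrite (nth_map j) ?size_enum_ord // nth_ord_enum.
  exists (map w (enum 'I_(size S))); split.
  + by rewrite size_map size_enum_ord.
  + by apply/allP => _ /mapP[j _ ->].
  + by rewrite big_map big_enum.
  + by under eq_bigr do rewrite nthW.
  + by under eq_bigr do rewrite nthW.
Qed.

Lemma inPoly_bary S n (w : 'I_n -> rat) (y : 'I_n -> rat * rat) :
  (forall j, 0 <= w j) -> \sum_j w j = 1 -> (forall j, inPoly S (y j)) ->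
  inPoly S (bary w y).
Proof.
move=> w0 w1 /(_ _)/inPolyP yS.
have [u uw yu] := fin_all_exists2 yS.
set Y := fun j : 'I_(size S) => ptQ (nth (0, 0) S j).
pose W k := \sum_j w j * u j k.
have mix (F : rat * rat -> rat) :
    (forall j, F (y j) = \sum_k u j k * F (Y k)) ->
  \sum_j w j * F (y j) = \sum_k W k * F (Y k).
  move=> Fy; under [RHS]eq_bigr do rewrite mulr_suml.
  rewrite exchange_big; apply: eq_bigr => j _.
  by rewrite Fy mulr_sumr; apply: eq_bigr => k _; rewrite mulrA.
apply/inPolyP; exists W; first split.
- move=> k; apply: sumr_ge0 => j _; apply: mulr_ge0 => //; exact: (uw j).1.
- rewrite exchange_big -w1; apply: eq_bigr => j _.
  by rewrite -mulr_sumr (uw j).2 mulr1.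
- by rewrite /bary (mix fst) ?(mix snd) // => j; rewrite yu.
Qed.

Lemma inPoly_cvx S l p q : 0 <= l <= 1 -> inPoly S p -> inPoly S q ->
  inPoly S (cvx l p q).
Proof.
move=> /andP[l0 l1] pS qS.
have := @inPoly_bary S 2 (fun j => if val j == 0%N then l else 1 - l)
  (fun j => if val j == 0%N then p else q).
rewrite /bary !big_ord_recl !big_ord0 /= !addr0; apply=> [j||j].
- by case: ifP; rewrite // subr_ge0.
- by rewrite addrC subrK.
- by case: ifP.
Qed.

Lemma inPoly_subset S T : (forall z, z \in T -> inPoly S (ptQ z)) ->
  forall x, inPoly T x -> inPoly S x.
Proof.
move=> TS x /inPolyP[w [w0 w1] ->].
by apply: inPoly_bary => // j; apply/TS/mem_nth.
Qed.

Lemma ptQ_inj : injective ptQ.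
Proof. by move=> [a b] [a' b'] [/intr_inj -> /intr_inj ->]. Qed.

(* Reflecting [a] through [P] stays on the segment [a, b] when [P] is at least
   as close to [a] as to [b]; so [P] is the midpoint of two points of conv S. *)
Lemma vertex_cvx_half S P l a b : is_vertex S P -> 1 / 2 <= l <= 1 ->
  inPoly S a -> inPoly S b -> ptQ P = cvx l a b -> a = ptQ P.
Proof.
case=> _ Pext /andP[l_ge l_le] aS bS Pab.
have yS : inPoly S (cvx (2 * l - 1) a b) by apply: inPoly_cvx => //; lra.
have Pmid : ptQ P = ((a.1 + (cvx (2 * l - 1) a b).1) / 2,
                     (a.2 + (cvx (2 * l - 1) a b).2) / 2).
  by rewrite Pab /cvx /=; congr pair; field.
rewrite Pmid -(Pext _ _ aS yS Pmid).
by case: a {aS Pab yS Pmid} => a1 a2 /=; congr pair; field.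
Qed.

Lemma vertex_cvx S P l a b : is_vertex S P -> 0 < l <= 1 ->
  inPoly S a -> inPoly S b -> ptQ P = cvx l a b -> a = ptQ P.
Proof.
move=> HP /andP[l0 l1] aS bS Pab.
have [lh|lh] := lerP (1 / 2) l.
  by apply: vertex_cvx_half HP _ aS bS Pab; lra.
have bP : b = ptQ P.
  apply: (vertex_cvx_half (l := 1 - l) HP _ bS aS); first lra.
  by rewrite Pab /cvx; congr pair; ring.
move: Pab; rewrite -bP /cvx; case: a b {aS bS bP} => a1 a2 [b1 b2] /= [e1 e2].
by congr pair; apply: (mulfI (lt0r_neq0 l0)); lra.
Qed.

Lemma sum_cvx_split n (w f : 'I_n -> rat) i : w i != 1 ->
  \sum_j w j * f j = w i * f i +
    (1 - w i) * \sum_j (if j == i then 0 else w j / (1 - w i)) * f j.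
Proof.
move=> wi1; have wi1' : 1 - w i != 0 by rewrite subr_eq0 eq_sym.
rewrite (bigD1 i) //= [X in (1 - w i) * X](bigD1 i) //= eqxx mul0r add0r.
rewrite mulr_sumr.
by congr (_ + _); apply: eq_bigr => j /negbTE ->; field.
Qed.

Lemma vertex_bary S P n (w : 'I_n -> rat) (y : 'I_n -> rat * rat) i :
  is_vertex S P -> (forall j, 0 <= w j) -> \sum_j w j = 1 ->
  (forall j, inPoly S (y j)) -> ptQ P = bary w y -> 0 < w i -> y i = ptQ P.
Proof.
move=> HP w0 w1 yS Pw wi0.
have wi_le1 : w i <= 1 by rewrite -w1 (bigD1 i) //= lerDl sumr_ge0.
have [wi1|wi1] := eqVneq (w i) 1.
- have rest0 j : j != i -> w j = 0.
    apply: (psumr_eq0P (P := fun j => j != i)) => // {j}.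
    by move: w1; rewrite (bigD1 i) //= wi1; lra.
  rewrite Pw /bary (bigD1 i) //= [X in (_, X)](bigD1 i) //= wi1 !mul1r.
  by rewrite !big1 ?addr0 -?surjective_pairing // => j /rest0->; rewrite mul0r.
- have wi1' : 1 - w i != 0 by rewrite subr_eq0 eq_sym.
  pose w' j := if j == i then 0 else w j / (1 - w i).
  have w'0 j : 0 <= w' j.
    by rewrite /w'; case: ifP => // _; apply: divr_ge0; [exact: w0 | lra].
  have w'1 : \sum_j w' j = 1.
    have rest : \sum_(j | j != i) w j = 1 - w i.
      by move: w1; rewrite (bigD1 i) //= => <-; rewrite addrAC subrr add0r.
    rewrite (bigD1 i) //= /w' eqxx add0r.
    by under eq_bigr => j /negbTE-> do []; rewrite -mulr_suml rest divff.
  apply: (vertex_cvx (l := w i) HP _ (yS i) (inPoly_bary w'0 w'1 yS)).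
    exact/andP.
  rewrite Pw /bary /cvx; congr pair.
    exact: (sum_cvx_split (fun j => (y j).1)).
  exact: (sum_cvx_split (fun j => (y j).2)).
Qed.

Lemma vertex_notin_conv S P T : is_vertex S P ->
  (forall z, z \in T -> inPoly S (ptQ z) /\ z <> P) -> ~ inPoly T (ptQ P).
Proof.
move=> HP TS /inPolyP[w [w0 w1] Pw].
have /existsP[i wi0] : [exists i, 0 < w i].
  apply: contraT => /existsPn w_le0; move: w1; rewrite big1 => [/eqP|j _].
    by rewrite eq_sym oner_eq0.
  by apply/eqP; rewrite eq_le w0 andbT leNgt w_le0.
apply: (TS _ (mem_nth _ (ltn_ord i))).2; apply: ptQ_inj.
by apply: (vertex_bary HP w0 w1 _ Pw wi0) => j; apply/(TS _ _).1/mem_nth.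
Qed.

Theorem mainTheorem5 (S : seq lpt) (d : int) (P : lpt) (T : seq lpt) :
  S != [::] ->
  (forall x, inPoly S x ->
     (0 <= x.1 <= d%:~R) && (0 <= x.2 <= d%:~R)) ->
  1 <= d ->
  is_lw S d ->
  minimal S ->
  is_vertex S P ->
  (forall z : lpt, z \in T <-> (inPoly S (ptQ z) /\ z <> P)) ->
  exists v : lpt, v \in [:: (0, 1); (1, 0); (1, 1); (1, -1)] /\ lwv T v < d.
Proof.
move=> _ box d_ge1 lwS minS HP HT.
case: (ltrP (lwv T (0, 1)) d) => [|h01]; first by exists (0, 1).
case: (ltrP (lwv T (1, 0)) d) => [|h10]; first by exists (1, 0).
case: (ltrP (lwv T (1, 1)) d) => [|h11]; first by exists (1, 1).
case: (ltrP (lwv T (1, -1)) d) => [|h1N]; first by exists (1, -1).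
exfalso.
have TS z : z \in T -> inPoly S (ptQ z) by case/HT.
have T_box z : z \in T -> (0 <= z.1 <= d) && (0 <= z.2 <= d).
  by move/TS/box; rewrite /= !ler0z !ler_int.
have T0 : T != [::] by apply: contraTneq h01 => ->; rewrite /=; lia.
have P_notin : ~ inPoly T (ptQ P) by apply: vertex_notin_conv HP _ => z /HT.
have [n lwT] := is_lw_exists T.
have := minS T T0 (inPoly_subset TS) (ex_intro _ _ (conj HP.1 P_notin)).
move=> /(_ d n lwS lwT).
case: lwT => [[v [pv <-]] _].
by rewrite ltNge (lwv_box_primitive_ge T_box h10 h01 h11 h1N pv).
Qed.
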